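(* Let $(G_i)_{i\in I}$ be a family of convergence groups, let $G=\prod_{i\in I}G_i$ with the product convergence structure, and let $e_i: G_i\to G$ be the natural injections. If $M\subseteq \Gamma_s G$ is compact, then there is a finite set $I_0\subseteq I$ such that $\varphi\circ e_i = 0$ for all $\varphi\in M$ and all $i\in I\setminus I_0$.
   Context: All groups are abelian. A convergence group is an abelian group with a convergence structure (an assignment to each point $x$ of a collection of filters converging to $x$). This assignment must satisfy three conditions: point ultrafilters converge to their point; finite intersections of filters converging to $x$ converge to $x$; and finer filters converge. The group operation must be compatible: $\mathcal F\to x$, $\mathcal G\to y$ imply $\mathcal F-\mathcal G\to x-y$. In the product convergence structure, a filter converges iff all its coordinate projections converge. $\mathbb T=\mathbb R/\mathbb Z$. $\Gamma G$ is the group of continuous homomorphisms $G\to\mathbb T$, and $\Gamma_s G$ is $\Gamma G$ with the topology of pointwise convergence on $G$. *)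

From Stdlib Require Import Reals List ClassicalEpsilon.
Open Scope R_scope.

Definition is_filter {X : Type} (F : (X -> Prop) -> Prop) : Prop :=
  F (fun _ => True) /\ ~ F (fun _ => False) /\
  (forall A B, F A -> F B -> F (fun x => A x /\ B x)) /\
  (forall A B : X -> Prop, (forall x, A x -> B x) -> F A -> F B).

Definition pfilter {X : Type} (x : X) : (X -> Prop) -> Prop := fun A => A x.
Definition finter {X : Type} (F G : (X -> Prop) -> Prop) : (X -> Prop) -> Prop :=
  fun A => F A /\ G A.
Definition fmap {X Y : Type} (f : X -> Y) (F : (X -> Prop) -> Prop) : (Y -> Prop) -> Prop :=
  fun B => F (fun x => B (f x)).

Record ConvGroup := {
  cg_car :> Type;
  cg_add : cg_car -> cg_car -> cg_car;
  cg_opp : cg_car -> cg_car;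
  cg_zero : cg_car;
  cg_addA : forall x y z, cg_add x (cg_add y z) = cg_add (cg_add x y) z;
  cg_addC : forall x y, cg_add x y = cg_add y x;
  cg_add0 : forall x, cg_add cg_zero x = x;
  cg_addN : forall x, cg_add (cg_opp x) x = cg_zero;
  cg_conv : ((cg_car -> Prop) -> Prop) -> cg_car -> Prop;
  cg_conv_point : forall x, cg_conv (pfilter x) x;
  cg_conv_inter : forall F G x, is_filter F -> is_filter G ->
      cg_conv F x -> cg_conv G x -> cg_conv (finter F G) x;
  cg_conv_finer : forall F G x, is_filter F -> is_filter G ->
      (forall A, F A -> G A) -> cg_conv F x -> cg_conv G x;
  (* compatibility: F -> x, G -> y imply F - G -> x - y, where F - G is the
     filter generated by the sets A - B, A in F, B in G *)
  cg_conv_sub : forall F G x y, is_filter F -> is_filter G ->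
      cg_conv F x -> cg_conv G y ->
      cg_conv (fun C => exists A B, F A /\ G B /\
                  forall a b, A a -> B b -> C (cg_add a (cg_opp b)))
              (cg_add x (cg_opp y))
}.

(** * The circle group T = R/Z, represented by [0,1) *)
Definition T := { r : R | 0 <= r < 1 }.

Lemma frac_part_range (r : R) : 0 <= frac_part r < 1.
Proof. destruct (base_fp r) as [H1 H2]. split; [apply Rge_le; exact H1 | exact H2]. Qed.

Definition Tadd (a b : T) : T :=
  exist _ (frac_part (proj1_sig a + proj1_sig b)) (frac_part_range _).

Lemma zero_range : 0 <= 0 < 1.
Proof. split; [apply Rle_refl | apply Rlt_0_1]. Qed.

Definition Tzero : T := exist _ 0 zero_range.

Definition Tdist (a b : T) : R :=
  Rmin (Rabs (proj1_sig a - proj1_sig b)) (1 - Rabs (proj1_sig a - proj1_sig b)).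

Definition Tconv (F : (T -> Prop) -> Prop) (t : T) : Prop :=
  forall eps, 0 < eps -> F (fun s => Tdist s t < eps).

Definition prodG {I : Type} (G : I -> ConvGroup) : Type := forall i, G i.

Definition prod_add {I : Type} (G : I -> ConvGroup) (x y : prodG G) : prodG G :=
  fun i => cg_add (G i) (x i) (y i).

Definition prod_zero {I : Type} (G : I -> ConvGroup) : prodG G :=
  fun i => cg_zero (G i).

Definition prod_conv {I : Type} (G : I -> ConvGroup)
    (F : (prodG G -> Prop) -> Prop) (x : prodG G) : Prop :=
  forall i, cg_conv (G i) (fmap (fun y : prodG G => y i) F) (x i).

Definition inj {I : Type} (G : I -> ConvGroup) (i : I) (g : G i) : prodG G :=
  fun j => match excluded_middle_informative (i = j) with
           | left h => eq_rect i (fun k => cg_car (G k)) g j h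
           | right _ => cg_zero (G j)
           end.

Definition in_Gamma_prod {I : Type} (G : I -> ConvGroup) (phi : prodG G -> T) : Prop :=
  (forall x y, phi (prod_add G x y) = Tadd (phi x) (phi y)) /\
  (forall F x, is_filter F -> prod_conv G F x -> Tconv (fmap phi F) (phi x)).

Definition pw_open {X : Type} (O : (X -> T) -> Prop) : Prop :=
  forall phi, O phi -> exists (xs : list X) (eps : R), 0 < eps /\
    forall psi, (forall x, In x xs -> Tdist (psi x) (phi x) < eps) -> O psi.

Definition pw_compact {X : Type} (M : (X -> T) -> Prop) : Prop :=
  forall (J : Type) (U : J -> (X -> T) -> Prop),
    (forall j, pw_open (U j)) ->
    (forall phi, M phi -> exists j, U j phi) ->
    exists js : list J, forall phi, M phi -> exists j, In j js /\ U j phi.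

(* 1. The circle has no small subgroups: a nonzero t ∈ T has a multiple at
      distance at least 1/3 from 0.  Consequently every character φ of G has
      a finite support: the filter of sets containing some subgroup
      { x | x_j = 0 for j ∈ J } (J finite) converges to 0 in the product, so
      by continuity φ is 1/3-small on one of these subgroups, hence zero there.

   2. A gliding hump.  If the theorem fails we pick, one after another,
      fresh coordinates i_k, characters φ_k ∈ M with supports J_k and points
      y_k concentrated at i_k with φ_k(y_k) far from 0, every i_l (l > k)
      avoiding i_k and J_k.  Adding to 0 the humps y_k, k ≥ N, greedily
      (only when needed) yields points x_N with φ_k(x_N) ≥ 1/6 for k ≥ N.

   3. Compactness.  The sets { φ | φ(x_N) < 1/6 } are open and cover M
      (x_N vanishes on the support of any given character for N large), so
      finitely many cover M; this fails for φ_K with K beyond them all. *)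

From Stdlib Require Import Reals List Lra Lia ZArith.
From Stdlib Require Import Classical ClassicalEpsilon FunctionalExtensionality ProofIrrelevance.
Open Scope R_scope.

Lemma frac_part_char (x r : R) (n : Z) : x = IZR n + r -> 0 <= r < 1 -> frac_part x = r.
Proof.
  intros Hx [H0 H1]. unfold frac_part, Int_part.
  rewrite <- (tech_up x (n + 1)).
  - rewrite minus_IZR, plus_IZR. simpl. lra.
  - rewrite plus_IZR. simpl. lra.
  - rewrite plus_IZR. simpl. lra.
Qed.

Lemma frac_part_decomp (x : R) : x = IZR (Int_part x) + frac_part x.
Proof. unfold frac_part. ring. Qed.

Lemma frac_part_shift (x : R) (n : Z) : frac_part (x + IZR n) = frac_part x.
Proof.
  apply frac_part_char with (n := (Int_part x + n)%Z); [|apply frac_part_range].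
  rewrite plus_IZR. pose proof (frac_part_decomp x). lra.
Qed.

Lemma frac_part_add_frac (a b : R) : frac_part (a + frac_part b) = frac_part (a + b).
Proof.
  replace (a + frac_part b) with ((a + b) + IZR (- Int_part b)).
  - apply frac_part_shift.
  - rewrite opp_IZR. unfold frac_part. ring.
Qed.

Lemma frac_part_id (x : R) : 0 <= x < 1 -> frac_part x = x.
Proof. intros H. apply frac_part_char with (n := 0%Z); [simpl; ring | exact H]. Qed.

Definition dist_Z (x : R) : R := Rmin (frac_part x) (1 - frac_part x).

Lemma dist_Z_le_int (x : R) (n : Z) : dist_Z x <= Rabs (x - IZR n).
Proof.
  unfold dist_Z. pose proof (frac_part_decomp x). pose proof (frac_part_range x).
  set (a := frac_part x) in *. set (k := Int_part x) in *.
  replace (x - IZR n) with (a + IZR (k - n)) by (rewrite minus_IZR; lra).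
  destruct (Z_le_gt_dec 0 (k - n)) as [Hkn|Hkn].
  - apply IZR_le in Hkn. rewrite Rabs_right by lra.
    apply Rle_trans with a; [apply Rmin_l | lra].
  - assert (IZR (k - n) <= -1) by (apply IZR_le; lia).
    rewrite Rabs_left by lra.
    apply Rle_trans with (1 - a); [apply Rmin_r | lra].
Qed.

Lemma dist_Z_attained (x : R) : exists n, dist_Z x = Rabs (x - IZR n).
Proof.
  unfold dist_Z. pose proof (frac_part_decomp x). pose proof (frac_part_range x).
  set (a := frac_part x) in *. set (k := Int_part x) in *.
  destruct (Rle_dec a (1 - a)).
  - exists k. rewrite Rmin_left by lra. rewrite Rabs_right by lra. lra.
  - exists (k + 1)%Z. rewrite Rmin_right, plus_IZR by lra.
    rewrite Rabs_left by (simpl; lra). simpl; lra.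
Qed.

Lemma dist_Z_add (x y : R) : dist_Z (x + y) <= dist_Z x + dist_Z y.
Proof.
  destruct (dist_Z_attained x) as [n ->], (dist_Z_attained y) as [m ->].
  eapply Rle_trans; [apply (dist_Z_le_int _ (n + m))|]. rewrite plus_IZR.
  replace (x + y - (IZR n + IZR m)) with ((x - IZR n) + (y - IZR m)) by ring.
  apply Rabs_triang.
Qed.

Lemma dist_Z_opp_le (x : R) : dist_Z (- x) <= dist_Z x.
Proof.
  destruct (dist_Z_attained x) as [n ->].
  eapply Rle_trans; [apply (dist_Z_le_int _ (- n))|]. rewrite opp_IZR.
  replace (- x - - IZR n) with (- (x - IZR n)) by ring. rewrite Rabs_Ropp. lra.
Qed.

Lemma dist_Z_opp (x : R) : dist_Z (- x) = dist_Z x.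
Proof.
  apply Rle_antisym; [apply dist_Z_opp_le|].
  rewrite <- (Ropp_involutive x) at 1. apply dist_Z_opp_le.
Qed.

Lemma dist_Z_shift (x : R) (n : Z) : dist_Z (x + IZR n) = dist_Z x.
Proof. unfold dist_Z. rewrite frac_part_shift. reflexivity. Qed.

Lemma dist_Z_frac (x : R) : dist_Z (frac_part x) = dist_Z x.
Proof. unfold dist_Z. rewrite (frac_part_id _ (frac_part_range x)). reflexivity. Qed.

Lemma dist_Z_0 : dist_Z 0 = 0.
Proof. unfold dist_Z. rewrite frac_part_id by lra. apply Rmin_left. lra. Qed.

Lemma dist_Z_le_half (x : R) : dist_Z x <= 1/2.
Proof.
  unfold dist_Z. destruct (Rle_dec (frac_part x) (1 - frac_part x)).
  - rewrite Rmin_left; lra.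
  - rewrite Rmin_right; lra.
Qed.

Lemma dist_Z_middle (x : R) : 1/3 <= x <= 2/3 -> 1/3 <= dist_Z x.
Proof. intros Hx. unfold dist_Z. rewrite frac_part_id by lra. apply Rmin_glb; lra. Qed.

Lemma dist_Z_mul_nearest (x : R) (m : Z) (n : nat) :
  dist_Z (INR n * x) = dist_Z (INR n * Rabs (x - IZR m)).
Proof.
  replace (INR n * x) with (INR n * (x - IZR m) + IZR (Z.of_nat n * m))
    by (rewrite mult_IZR, <- INR_IZR_INZ; ring).
  rewrite dist_Z_shift. destruct (Rle_dec 0 (x - IZR m)).
  - rewrite Rabs_right by lra. reflexivity.
  - rewrite Rabs_left by lra.
    replace (INR n * - (x - IZR m)) with (- (INR n * (x - IZR m))) by ring.
    rewrite dist_Z_opp. reflexivity.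
Qed.

(* A non-integer has a multiple at distance at least 1/3 from Z: scale its
   distance d to Z by the first integer n with n d > 1/3. *)
Lemma dist_Z_far_multiple (x : R) : 0 < dist_Z x -> exists n : nat, 1/3 <= dist_Z (INR n * x).
Proof.
  intros Hpos. destruct (dist_Z_attained x) as [m Hm].
  pose proof (dist_Z_le_half x) as Hhalf.
  destruct (Rle_dec (1/3) (dist_Z x)) as [Hfar|Hnear].
  { exists 1%nat. simpl INR. rewrite Rmult_1_l. exact Hfar. }
  set (d := dist_Z x) in *. set (w := 1 / (3 * d)).
  assert (Hwd : w * d = 1/3) by (unfold w; field; lra).
  destruct (archimed w) as [Hup1 Hup2]. set (z := up w) in *.
  assert (Hz : (0 <= z)%Z) by (apply le_IZR; apply Rlt_le, Rlt_trans with w;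
    [unfold w; apply Rdiv_lt_0_compat; lra | exact Hup1]).
  exists (Z.to_nat z). rewrite (dist_Z_mul_nearest x m), <- Hm.
  rewrite INR_IZR_INZ, Z2Nat.id by exact Hz.
  apply dist_Z_middle. split.
  - rewrite <- Hwd. apply Rmult_le_compat_r; lra.
  - apply Rle_trans with ((w + 1) * d); [apply Rmult_le_compat_r; lra | nra].
Qed.

Definition Tv (t : T) : R := proj1_sig t.

Lemma Tv_range (t : T) : 0 <= Tv t < 1.
Proof. exact (proj2_sig t). Qed.

Lemma Tv_inj (a b : T) : Tv a = Tv b -> a = b.
Proof.
  destruct a as [a Ha], b as [b Hb]. unfold Tv; simpl. intros ->.
  f_equal. apply proof_irrelevance.
Qed.

Lemma Tv_add (a b : T) : Tv (Tadd a b) = frac_part (Tv a + Tv b).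
Proof. reflexivity. Qed.

Definition dT (t : T) : R := Tdist t Tzero.

Lemma Tdist_eq (a b : T) : Tdist a b = dist_Z (Tv a - Tv b).
Proof.
  unfold Tdist, dist_Z. pose proof (Tv_range a). pose proof (Tv_range b). unfold Tv in *.
  destruct (Rle_dec 0 (proj1_sig a - proj1_sig b)).
  - rewrite (frac_part_id (proj1_sig a - proj1_sig b)) by lra.
    rewrite Rabs_right by lra. reflexivity.
  - rewrite (frac_part_char _ (proj1_sig a - proj1_sig b + 1) (-1)) by (simpl; lra).
    rewrite Rabs_left by lra. rewrite Rmin_comm. f_equal; lra.
Qed.

Lemma dT_eq (t : T) : dT t = dist_Z (Tv t).
Proof. unfold dT. rewrite Tdist_eq. unfold Tzero, Tv at 2. simpl. f_equal. ring. Qed.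

Lemma dT_zero : dT Tzero = 0.
Proof. rewrite dT_eq. apply dist_Z_0. Qed.

Lemma dT_triangle (a b : T) : dT a <= Tdist a b + dT b.
Proof.
  rewrite !dT_eq, Tdist_eq.
  replace (Tv a) with ((Tv a - Tv b) + Tv b) at 1 by ring. apply dist_Z_add.
Qed.

Lemma dT_add_lower (p s : T) : dT s <= dT (Tadd p s) + dT p.
Proof.
  rewrite !dT_eq, Tv_add, dist_Z_frac.
  replace (Tv s) with ((Tv p + Tv s) + - Tv p) at 1 by ring.
  pose proof (dist_Z_add (Tv p + Tv s) (- Tv p)). rewrite dist_Z_opp in *. lra.
Qed.

Lemma Tadd_zero_r (t : T) : Tadd t Tzero = t.
Proof.
  apply Tv_inj. rewrite Tv_add. unfold Tzero, Tv at 2. simpl.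
  rewrite Rplus_0_r. apply frac_part_id, Tv_range.
Qed.

Lemma Tadd_idem (t : T) : Tadd t t = t -> t = Tzero.
Proof.
  intros H. apply Tv_inj. apply (f_equal Tv) in H. rewrite Tv_add in H.
  pose proof (Tv_range t). unfold Tzero, Tv in *; simpl in *.
  set (a := proj1_sig t) in *.
  destruct (Rlt_dec a (1/2)).
  - rewrite (frac_part_char _ (a + a) 0) in H by (simpl; lra). lra.
  - rewrite (frac_part_char _ (a + a - 1) 1) in H by (simpl; lra). lra.
Qed.

Fixpoint Tmul (n : nat) (t : T) : T :=
  match n with O => Tzero | S n => Tadd t (Tmul n t) end.

Lemma Tv_mul (n : nat) (t : T) : Tv (Tmul n t) = frac_part (INR n * Tv t).
Proof.
  induction n as [|n IH]; simpl Tmul.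
  - unfold Tzero, Tv; simpl. rewrite Rmult_0_l, frac_part_id; lra.
  - rewrite Tv_add, IH, frac_part_add_frac, S_INR. f_equal. ring.
Qed.

(* T has no small subgroups. *)
Lemma T_far_multiple (t : T) : t <> Tzero -> exists n, 1/3 <= dT (Tmul n t).
Proof.
  intros Ht. pose proof (Tv_range t) as Hr.
  assert (Hne : Tv t <> 0) by (intros E; apply Ht, Tv_inj; exact E).
  destruct (dist_Z_far_multiple (Tv t)) as [n Hn].
  - unfold dist_Z. rewrite frac_part_id by exact Hr. apply Rmin_glb_lt; lra.
  - exists n. rewrite dT_eq, Tv_mul, dist_Z_frac. exact Hn.
Qed.

Definition prod_opp {I : Type} (G : I -> ConvGroup) (x : prodG G) : prodG G :=
  fun i => cg_opp (G i) (x i).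

Fixpoint prod_mul {I : Type} (G : I -> ConvGroup) (n : nat) (x : prodG G) : prodG G :=
  match n with O => prod_zero G | S n => prod_add G x (prod_mul G n x) end.

Lemma cg_add0r (A : ConvGroup) (x : A) : cg_add A x (cg_zero A) = x.
Proof. rewrite cg_addC. apply cg_add0. Qed.

Lemma prod_mul_coord_zero {I : Type} (G : I -> ConvGroup) (n : nat) (x : prodG G) (j : I) :
  x j = cg_zero (G j) -> prod_mul G n x j = cg_zero (G j).
Proof.
  intros Hx. induction n as [|n IH]; simpl; [reflexivity|].
  unfold prod_add. rewrite Hx, IH. apply cg_add0.
Qed.

Lemma inj_off {I : Type} (G : I -> ConvGroup) (i : I) (g : G i) (j : I) :
  j <> i -> inj G i g j = cg_zero (G j).
Proof.
  intros Hj. unfold inj. destruct (excluded_middle_informative (i = j)) as [E|E];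
    [exfalso; apply Hj; symmetry; exact E | reflexivity].
Qed.

Lemma gamma_zero {I : Type} (G : I -> ConvGroup) (phi : prodG G -> T) :
  in_Gamma_prod G phi -> phi (prod_zero G) = Tzero.
Proof.
  intros [Hhom _]. apply Tadd_idem. rewrite <- Hhom. f_equal.
  apply functional_extensionality_dep. intro i. apply cg_add0.
Qed.

Lemma gamma_mul {I : Type} (G : I -> ConvGroup) (phi : prodG G -> T) (n : nat) (x : prodG G) :
  in_Gamma_prod G phi -> phi (prod_mul G n x) = Tmul n (phi x).
Proof.
  intros Hg. induction n as [|n IH]; simpl.
  - apply gamma_zero, Hg.
  - destruct Hg as [Hhom _]. rewrite Hhom, IH. reflexivity.
Qed.

(** * Characters of a product have finite support *)

Definition factors_through {I : Type} (G : I -> ConvGroup) (phi : prodG G -> T) (J : list I) :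
  Prop :=
  forall x : prodG G, (forall j, In j J -> x j = cg_zero (G j)) -> phi x = Tzero.

Lemma factors_through_eq {I : Type} (G : I -> ConvGroup) (phi : prodG G -> T) (J : list I) :
  in_Gamma_prod G phi -> factors_through G phi J ->
  forall a b : prodG G, (forall j, In j J -> a j = b j) -> phi a = phi b.
Proof.
  intros [Hhom _] HJ a b Hab.
  assert (E : a = prod_add G b (prod_add G a (prod_opp G b))).
  { apply functional_extensionality_dep. intro i. unfold prod_add, prod_opp.
    rewrite (cg_addC _ (a i)), cg_addA, (cg_addC _ (b i)), cg_addN, cg_add0. reflexivity. }
  rewrite E at 1. rewrite Hhom, (HJ (prod_add G a (prod_opp G b))), Tadd_zero_r; [reflexivity|].
  intros j Hj. unfold prod_add, prod_opp. rewrite Hab by exact Hj.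
  rewrite cg_addC. apply cg_addN.
Qed.

Lemma is_filter_pfilter {X : Type} (x : X) : is_filter (pfilter x).
Proof. unfold is_filter, pfilter. repeat split; auto. Qed.

Lemma is_filter_fmap {X Y : Type} (f : X -> Y) (F : (X -> Prop) -> Prop) :
  is_filter F -> is_filter (fmap f F).
Proof.
  unfold is_filter, fmap. intros (Htop & Hbot & Hcap & Hup). repeat split; auto.
  intros A B HAB. apply Hup. intros x. apply HAB.
Qed.

Definition vanish_filter {I : Type} (G : I -> ConvGroup) (A : prodG G -> Prop) : Prop :=
  exists J : list I, forall x : prodG G, (forall j, In j J -> x j = cg_zero (G j)) -> A x.

Lemma is_filter_vanish {I : Type} (G : I -> ConvGroup) : is_filter (vanish_filter G).
Proof.
  unfold is_filter, vanish_filter. repeat split.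
  - exists nil. auto.
  - intros [J HJ]. apply (HJ (prod_zero G)). intros; reflexivity.
  - intros A B [J1 H1] [J2 H2]. exists (J1 ++ J2). intros x Hx.
    split; [apply H1 | apply H2]; intros j Hj; apply Hx, in_or_app; auto.
  - intros A B HAB [J HJ]. exists J. intros x Hx. apply HAB, HJ, Hx.
Qed.

(* Each projection of the vanishing filter is finer than the point filter at 0. *)
Lemma vanish_filter_conv {I : Type} (G : I -> ConvGroup) :
  prod_conv G (vanish_filter G) (prod_zero G).
Proof.
  intros i. apply cg_conv_finer with (F := pfilter (prod_zero G i)).
  - apply is_filter_pfilter.
  - apply is_filter_fmap, is_filter_vanish.
  - intros A HA. exists (i :: nil). intros x Hx.
    rewrite Hx by (left; reflexivity). exact HA.
  - apply cg_conv_point.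
Qed.

(* By continuity phi is 1/3-small on some subgroup { x | x_J = 0 }; as T has
   no small subgroups, phi vanishes on it. *)
Lemma gamma_finite_support {I : Type} (G : I -> ConvGroup) (phi : prodG G -> T) :
  in_Gamma_prod G phi -> exists J : list I, factors_through G phi J.
Proof.
  intros Hg. pose proof Hg as [_ Hcont].
  destruct (Hcont _ _ (is_filter_vanish G) (vanish_filter_conv G) (1/3) ltac:(lra))
    as [J Hsmall].
  rewrite (gamma_zero G phi Hg) in Hsmall. exists J.
  intros x Hx. apply NNPP. intros Hne.
  destruct (T_far_multiple _ Hne) as [n Hn]. rewrite <- (gamma_mul G phi n x Hg) in Hn.
  assert (Tdist (phi (prod_mul G n x)) Tzero < 1/3).
  { apply Hsmall. intros j Hj. apply prod_mul_coord_zero, Hx, Hj. }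
  unfold dT in Hn. lra.
Qed.

(** * A gliding hump *)

Section GlidingHump.

Variables (I : Type) (G : I -> ConvGroup).
Variables (idx : nat -> I) (ph : nat -> prodG G -> T) (J : nat -> list I) (y : nat -> prodG G).

Hypothesis ph_gamma : forall k, in_Gamma_prod G (ph k).
Hypothesis ph_support : forall k, factors_through G (ph k) (J k).
Hypothesis y_support : forall k j, j <> idx k -> y k j = cg_zero (G j).
Hypothesis y_far : forall k, 1/3 <= dT (ph k (y k)).
Hypothesis idx_fresh : forall k l, (k < l)%nat -> ~ In (idx l) (idx k :: J k).

Definition hump_step (k : nat) (p : prodG G) : prodG G :=
  if Rle_dec (1/6) (dT (ph k p)) then p else prod_add G p (y k).

Lemma hump_step_far (k : nat) (p : prodG G) : 1/6 <= dT (ph k (hump_step k p)).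
Proof.
  unfold hump_step. destruct (Rle_dec _ _) as [H|H]; [exact H|].
  destruct (ph_gamma k) as [Hhom _]. rewrite Hhom.
  pose proof (dT_add_lower (ph k p) (ph k (y k))). pose proof (y_far k). lra.
Qed.

Lemma hump_step_off (k : nat) (p : prodG G) (j : I) : idx k <> j -> hump_step k p j = p j.
Proof.
  intros Hj. unfold hump_step. destruct (Rle_dec _ _); [reflexivity|].
  unfold prod_add. rewrite y_support by congruence. apply cg_add0r.
Qed.

(* partial N k: the humps y_N, ..., y_k added greedily (0 for k < N). *)
Fixpoint partial (N k : nat) : prodG G :=
  if Nat.ltb k N then prod_zero G
  else hump_step k (match k with O => prod_zero G | S k' => partial N k' end).

Lemma partial_before (N k : nat) : (k < N)%nat -> partial N k = prod_zero G.
Proof. intros Hk. destruct k; simpl; rewrite (proj2 (Nat.ltb_lt _ _) Hk); reflexivity. Qed.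

Lemma partial_far (N k : nat) : (N <= k)%nat -> 1/6 <= dT (ph k (partial N k)).
Proof. intros Hk. destruct k; simpl; rewrite (proj2 (Nat.ltb_ge _ _) Hk); apply hump_step_far. Qed.

Lemma partial_coord_zero (N : nat) (j : I) : idx 0 <> j -> partial N 0 j = cg_zero (G j).
Proof. intros Hj. simpl. destruct (Nat.ltb 0 N); [reflexivity|]. apply hump_step_off, Hj. Qed.

(* Stage k changes only the coordinate idx k. *)
Lemma partial_stable (N : nat) (j : I) (m k : nat) : (m <= k)%nat ->
  (forall l, (m < l <= k)%nat -> idx l <> j) -> partial N k j = partial N m j.
Proof.
  induction 1 as [|k Hmk IH]; intros Hl; [reflexivity|].
  transitivity (partial N k j); [|apply IH; intros l Hl'; apply Hl; lia].
  simpl (partial N (S k)). destruct (Nat.ltb (S k) N) eqn:E.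
  - apply Nat.ltb_lt in E. rewrite partial_before by lia. reflexivity.
  - apply hump_step_off, Hl. lia.
Qed.

(* The limit of the partial sums: coordinate idx l is frozen from stage l on. *)
Definition hump (N : nat) : prodG G := fun j =>
  match excluded_middle_informative (exists l, idx l = j) with
  | left h => partial N (proj1_sig (constructive_indefinite_description _ h)) j
  | right _ => cg_zero (G j)
  end.

Lemma hump_agree (N k : nat) (j : I) :
  (forall l, (k < l)%nat -> idx l <> j) -> hump N j = partial N k j.
Proof.
  intros Hl. unfold hump. destruct (excluded_middle_informative _) as [h|h].
  - destruct (constructive_indefinite_description _ h) as [l0 Hl0]. simpl.
    destruct (Nat.le_gt_cases l0 k) as [Hle|Hgt]; [|exfalso; exact (Hl l0 Hgt Hl0)].
    symmetry. apply partial_stable; [exact Hle|]. intros l Hl' E.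
    apply (idx_fresh l0 l); [lia|]. left. congruence.
  - symmetry. rewrite (partial_stable N j 0 k); [| lia | intros l _ E; apply h; eauto].
    apply partial_coord_zero. intros E. apply h. eauto.
Qed.

Lemma hump_vanish (N : nat) (j : I) :
  (forall l, (N <= l)%nat -> idx l <> j) -> hump N j = cg_zero (G j).
Proof.
  intros Hl. unfold hump. destruct (excluded_middle_informative _) as [h|h]; [|reflexivity].
  destruct (constructive_indefinite_description _ h) as [l0 Hl0]. simpl.
  destruct (Nat.lt_ge_cases l0 N) as [Hlt|Hge].
  - rewrite partial_before by exact Hlt. reflexivity.
  - exfalso. exact (Hl l0 Hge Hl0).
Qed.

(* ph_k only sees the coordinates in J k, where hump N agrees with partial N k. *)
Lemma hump_far (N k : nat) : (N <= k)%nat -> 1/6 <= dT (ph k (hump N)).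
Proof.
  intros Hk. rewrite (factors_through_eq G (ph k) (J k) (ph_gamma k) (ph_support k)
                        (hump N) (partial N k)).
  - apply partial_far, Hk.
  - intros j Hj. apply hump_agree. intros l Hl E.
    apply (idx_fresh k l Hl). right. rewrite E. exact Hj.
Qed.

End GlidingHump.

(** * Compactness rules out the gliding hump *)

Lemma pw_open_small_at {X : Type} (x : X) (r : R) : pw_open (fun phi : X -> T => dT (phi x) < r).
Proof.
  intros phi Hphi. exists (x :: nil), (r - dT (phi x)). split; [lra|].
  intros psi Hpsi. specialize (Hpsi x (or_introl eq_refl)).
  pose proof (dT_triangle (psi x) (phi x)). lra.
Qed.

Lemma injective_eventually_avoids {I : Type} (idx : nat -> I) :
  (forall k l, idx k = idx l -> k = l) ->
  forall L : list I, exists N, forall l, (N <= l)%nat -> ~ In (idx l) L.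
Proof.
  intros Hinj L. induction L as [|a L [N HN]].
  - exists 0%nat. intros l _ [].
  - destruct (classic (exists l, idx l = a)) as [[l0 Hl0]|Hnone].
    + exists (Nat.max N (S l0)). intros l Hl [E|E].
      * rewrite <- Hl0 in E. apply Hinj in E. lia.
      * apply (HN l); [lia | exact E].
    + exists N. intros l Hl [E|E]; [apply Hnone; eauto | exact (HN l Hl E)].
Qed.

Lemma list_max_ge (l : list nat) (n : nat) : In n l -> (n <= fold_right Nat.max 0 l)%nat.
Proof.
  induction l as [|a l IH]; simpl; [tauto|].
  intros [->|H]; [lia|]. specialize (IH H). lia.
Qed.

(* The open sets { phi | phi(hump N) < 1/6 } cover M; a finite subcover
   indexed by N's at most K misses ph K. *)
Lemma no_gliding_hump (I : Type) (G : I -> ConvGroup) (M : (prodG G -> T) -> Prop)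
  (HM : forall phi, M phi -> in_Gamma_prod G phi) (Hc : pw_compact M)
  (idx : nat -> I) (ph : nat -> prodG G -> T) (J : nat -> list I) (y : nat -> prodG G)
  (ph_in : forall k, M (ph k))
  (ph_support : forall k, factors_through G (ph k) (J k))
  (y_support : forall k j, j <> idx k -> y k j = cg_zero (G j))
  (y_far : forall k, 1/3 <= dT (ph k (y k)))
  (idx_fresh : forall k l, (k < l)%nat -> ~ In (idx l) (idx k :: J k)) : False.
Proof.
  assert (ph_gamma : forall k, in_Gamma_prod G (ph k)) by (intro k; apply HM, ph_in).
  assert (idx_inj : forall k l, idx k = idx l -> k = l).
  { intros k l E. destruct (Nat.lt_total k l) as [Hkl|[Hkl|Hkl]]; [|exact Hkl|];
      exfalso; [apply (idx_fresh k l Hkl) | apply (idx_fresh l k Hkl)]; left; congruence. }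
  set (x := hump I G idx ph y).
  destruct (Hc nat (fun N phi => dT (phi (x N)) < 1/6)) as [Ns HNs].
  - intro N. apply pw_open_small_at.
  - intros psi Hpsi. destruct (gamma_finite_support G psi (HM _ Hpsi)) as [Jpsi HJ].
    destruct (injective_eventually_avoids idx idx_inj Jpsi) as [N HN]. exists N.
    rewrite (HJ (x N)), dT_zero; [lra|].
    intros j Hj. apply hump_vanish. intros l Hl E. apply (HN l Hl). rewrite E. exact Hj.
  - set (K := fold_right Nat.max 0%nat Ns).
    destruct (HNs (ph K) (ph_in K)) as [N [HN Hsmall]].
    pose proof (hump_far I G idx ph J y ph_gamma ph_support y_support y_far idx_fresh
                  N K (list_max_ge Ns N HN)).
    unfold x in Hsmall. lra.
Qed.

(* The coordinates and supports chosen in the first k steps. *)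
Fixpoint history {I A : Type} (pick : list I -> I * A) (J : A -> list I) (k : nat) : list I :=
  match k with
  | O => nil
  | S k => let L := history pick J k in L ++ fst (pick L) :: J (snd (pick L))
  end.

Lemma history_mono {I A : Type} (pick : list I -> I * A) (J : A -> list I) (k l : nat) :
  (k <= l)%nat -> incl (history pick J k) (history pick J l).
Proof.
  induction 1 as [|l Hl IH]; [apply incl_refl|].
  intros a Ha. simpl. apply in_or_app. left. exact (IH a Ha).
Qed.

Lemma fresh_sequence {I A : Type} (P : I -> A -> Prop) (J : A -> list I) :
  (forall L : list I, exists i a, ~ In i L /\ P i a) ->
  exists (idx : nat -> I) (a : nat -> A), (forall k, P (idx k) (a k)) /\
    (forall k l, (k < l)%nat -> ~ In (idx l) (idx k :: J (a k))).
Proof.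
  intros Hfresh.
  destruct (choice (fun L (p : I * A) => ~ In (fst p) L /\ P (fst p) (snd p))) as [pick Hpick].
  { intros L. destruct (Hfresh L) as (i & a & H). exists (i, a). exact H. }
  exists (fun k => fst (pick (history pick J k))), (fun k => snd (pick (history pick J k))).
  split; [intro k; apply Hpick|].
  intros k l Hkl Hin. apply (proj1 (Hpick (history pick J l))).
  apply (history_mono pick J (S k) l Hkl). simpl. apply in_or_app. right. exact Hin.
Qed.

Record hump_data {I : Type} (G : I -> ConvGroup) := {
  hd_char : prodG G -> T;
  hd_support : list I;
  hd_point : prodG G
}.

Definition hump_witness {I : Type} (G : I -> ConvGroup) (M : (prodG G -> T) -> Prop)
  (i : I) (d : hump_data G) : Prop :=
  M (hd_char G d) /\ factors_through G (hd_char G d) (hd_support G d) /\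
  (forall j, j <> i -> hd_point G d j = cg_zero (G j)) /\ 1/3 <= dT (hd_char G d (hd_point G d)).

(* If no finite I0 works, every finite L misses a coordinate i on which some
   phi in M is nonzero; a multiple of e_i(g) gives the witness. *)
Lemma witness_outside (I : Type) (G : I -> ConvGroup) (M : (prodG G -> T) -> Prop)
  (HM : forall phi, M phi -> in_Gamma_prod G phi) :
  ~ (exists I0 : list I, forall phi, M phi -> forall i, ~ In i I0 ->
       forall g : G i, phi (inj G i g) = Tzero) ->
  forall L : list I, exists i d, ~ In i L /\ hump_witness G M i d.
Proof.
  intros Hfail L. apply NNPP. intros Hnone. apply Hfail. exists L.
  intros phi Hphi i Hi g. apply NNPP. intros Hne.
  destruct (T_far_multiple _ Hne) as [n Hn].
  destruct (gamma_finite_support G phi (HM _ Hphi)) as [J HJ].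
  apply Hnone. exists i, (Build_hump_data I G phi J (prod_mul G n (inj G i g))).
  repeat split; simpl; auto.
  - intros j Hj. apply prod_mul_coord_zero, inj_off, Hj.
  - rewrite gamma_mul by (apply HM, Hphi). exact Hn.
Qed.

Theorem lemma2p8 (I : Type) (G : I -> ConvGroup) (M : (prodG G -> T) -> Prop)
  (HM : forall phi, M phi -> in_Gamma_prod G phi)
  (Hc : pw_compact M) :
  exists I0 : list I, forall phi, M phi -> forall i, ~ In i I0 ->
    forall g : G i, phi (inj G i g) = Tzero.
Proof.
  apply NNPP. intros Hfail.
  destruct (fresh_sequence (hump_witness G M) (hd_support G) (witness_outside I G M HM Hfail))
    as (idx & d & Hd & Hfresh).
  apply (no_gliding_hump I G M HM Hc idx (fun k => hd_char G (d k))
           (fun k => hd_support G (d k)) (fun k => hd_point G (d k)));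
    try exact Hfresh; intro k; apply Hd.
Qed.
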